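(* Let $n\ge2$, $V>0$, $c\in(0,\infty)$, and for $i,j\in[n]$ let $\Sigma_n^{\mathrm{sb}}$ have entries $\frac{V\pi}{i+j}$ and $\Sigma_n^{\mathrm{sp}}$ have entries $\frac{4V\pi^2}{(i+1)(j+1)}$. Let $\Sigma_n^{\mathrm{cr}}=\Sigma_n^{\mathrm{sb}}+c\Sigma_n^{\mathrm{sp}}$ if $c\le1$ and $\Sigma_n^{\mathrm{cr}}=\frac1c\Sigma_n^{\mathrm{sb}}+\Sigma_n^{\mathrm{sp}}$ if $c>1$. Let $\Sigma_n^{\mathrm{sb}}=L^{\mathrm{sb}}U^{\mathrm{sb}}$ be the (unique) LU decomposition of $\Sigma_n^{\mathrm{sb}}$ with $L^{\mathrm{sb}}$ unit lower triangular and $U^{\mathrm{sb}}$ upper triangular, and let $U^{\mathrm{sp}}=(u^{\mathrm{sp}}_{ij})$ be given by $u^{\mathrm{sp}}_{1j}=\frac{2V\pi^2}{j+1}$ and $u^{\mathrm{sp}}_{ij}=0$ for $i\ge2$ (so that $\Sigma_n^{\mathrm{sp}}=L^{\mathrm{sp}}U^{\mathrm{sp}}$ with $L^{\mathrm{sp}}$ unit lower triangular with first column $(2/(i+1))_i$ and zeros elsewhere below the diagonal). Then the (unique) LU decomposition $\Sigma_n^{\mathrm{cr}}=L^{\mathrm{cr}}U^{\mathrm{cr}}$ with $L^{\mathrm{cr}}$ unit lower triangular satisfies: (i) for $c\in(0,1]$, $L^{\mathrm{cr}}=L^{\mathrm{sb}}$ and $U^{\mathrm{cr}}=U^{\mathrm{sb}}+cU^{\mathrm{sp}}$;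 (ii) for $c\in(1,\infty)$, $L^{\mathrm{cr}}=L^{\mathrm{sb}}$ and $U^{\mathrm{cr}}=\frac1cU^{\mathrm{sb}}+U^{\mathrm{sp}}$.
   Context: These are the subcritical, supercritical and critical asymptotic covariance matrices of the vector $(\tilde L_t^{(0)},\dots,\tilde L_t^{(n-1)})$ of normalized length power functionals of a random geometric graph in dimension $d=2$ ($\tau_i=i-1$, $\kappa_2=\pi$) on a window of volume $V$; $c=\lim t\delta_t^2$. $[n]=\{1,\dots,n\}$. *)

From HB Require Import structures.
From mathcomp Require Import all_boot all_order all_algebra.
From mathcomp Require Import all_classical all_reals all_analysis.
Set Implicit Arguments. Unset Strict Implicit. Unset Printing Implicit Defensive.
Import Order.TTheory GRing.Theory Num.Theory.
Local Open Scope ring_scope.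

(* Indices i j : 'I_n are 0-based; the paper's 1-based indices are i.+1, j.+1. *)

Definition Sigma_sb (R : realType) (n : nat) (V : R) : 'M[R]_n :=
  \matrix_(i < n, j < n) (V * pi / ((i.+1 + j.+1)%:R)).

Definition Sigma_sp (R : realType) (n : nat) (V : R) : 'M[R]_n :=
  \matrix_(i < n, j < n) (4 * V * pi ^+ 2 / ((i.+2)%:R * (j.+2)%:R)).

Definition Sigma_cr (R : realType) (n : nat) (V c : R) : 'M[R]_n :=
  if c <= 1 then Sigma_sb n V + c *: Sigma_sp n V
  else c^-1 *: Sigma_sb n V + Sigma_sp n V.

Definition U_sp (R : realType) (n : nat) (V : R) : 'M[R]_n :=
  \matrix_(i < n, j < n)
    (if (i == 0%N :> nat) then 2 * V * pi ^+ 2 / ((j.+2)%:R) else 0).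

Definition unit_lower_triangular (R : ringType) (n : nat) (L : 'M[R]_n) : Prop :=
  (forall i j : 'I_n, (i < j)%N -> L i j = 0) /\ (forall i : 'I_n, L i i = 1).

Definition upper_triangular (R : ringType) (n : nat) (U : 'M[R]_n) : Prop :=
  forall i j : 'I_n, (j < i)%N -> U i j = 0.

Definition is_LU (R : ringType) (n : nat) (A L U : 'M[R]_n) : Prop :=
  [/\ A = L *m U, unit_lower_triangular L & upper_triangular U].

From HB Require Import structures.
From mathcomp Require Import all_boot all_order all_algebra.
From mathcomp Require Import all_classical all_reals all_analysis.
From mathcomp Require Import ring.

(** The subcritical covariance [V pi / (i + j)] is a Cauchy matrix
    [a_i b_j / (x_i + y_j)], and the Schur complement of the top-left entry
    of a Cauchy matrix is again a Cauchy matrix; by induction it has an LU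
    decomposition with nonzero pivots, so it is invertible and its LU
    decomposition is unique.  Its first column is proportional to
    [(1 / (i + 1))_i], which is also the column spanning the rank-one matrix
    [Sigma^sp].  Hence [Sigma^sp = L^sb U^sp], and every combination
    [s Sigma^sb + t Sigma^sp] with [s, t > 0] factors as
    [L^sb (s U^sb + t U^sp)], whose pivots are still nonzero; uniqueness of
    LU decompositions of invertible matrices concludes. *)

Set Implicit Arguments. Unset Strict Implicit. Unset Printing Implicit Defensive.
Import Order.TTheory GRing.Theory Num.Theory.
Local Open Scope ring_scope.

Lemma unit_lower_triangular_trig (R : nzRingType) n (L : 'M[R]_n) :
  unit_lower_triangular L -> is_trig_mx L.
Proof. by move=> [L0 _]; apply/is_trig_mxP. Qed.

Lemma upper_triangular_trig (R : nzRingType) n (U : 'M[R]_n) :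
  upper_triangular U -> is_trig_mx U^T.
Proof. by move=> U0; apply/is_trig_mxP => i j ij; rewrite mxE U0. Qed.

Lemma det_LU (R : comNzRingType) n (A L U : 'M[R]_n) :
  is_LU A L U -> \det A = \prod_i U i i.
Proof.
move=> [-> Ll Uu]; rewrite det_mulmx -(det_tr U).
rewrite (det_trig (unit_lower_triangular_trig Ll)).
rewrite (det_trig (upper_triangular_trig Uu)) big1 ?mul1r => [|i _]; last by case: Ll.
by apply: eq_bigr => i _; rewrite mxE.
Qed.

Lemma unitmx_LU (R : fieldType) n (A L U : 'M[R]_n) :
  is_LU A L U -> (A \in unitmx) = [forall i, U i i != 0].
Proof.
move=> LU; rewrite unitmxE unitfE (det_LU LU).
by apply/prodf_neq0/forallP => U_neq0 i //; apply: U_neq0.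
Qed.

Lemma is_LU_lin (R : comNzRingType) n (A B L U1 U2 : 'M[R]_n) (s t : R) :
  is_LU A L U1 -> is_LU B L U2 -> is_LU (s *: A + t *: B) L (s *: U1 + t *: U2).
Proof.
move=> [-> Ll U1u] [-> _ U2u]; split=> //.
  by rewrite mulmxDr -!scalemxAr.
by move=> i j ji; rewrite !mxE U1u ?U2u // !mulr0 addr0.
Qed.

Lemma LU_row0 (R : nzRingType) n (A L U : 'M[R]_n.+1) j :
  is_LU A L U -> A ord0 j = U ord0 j.
Proof.
move=> [-> [L0 L1] _]; rewrite mxE big_ord_recl L1 mul1r big1 ?addr0 // => k _.
by rewrite L0 ?mul0r // lift0.
Qed.

Lemma LU_col0 (R : nzRingType) n (A L U : 'M[R]_n.+1) i :
  is_LU A L U -> A i ord0 = L i ord0 * U ord0 ord0.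
Proof.
move=> [-> _ U0]; rewrite mxE big_ord_recl big1 ?addr0 // => k _.
by rewrite U0 ?mulr0 // lift0.
Qed.

Lemma mulmxE_split (R : nzRingType) n (L U : 'M[R]_n) (i j p : 'I_n) :
  (forall k : 'I_n, (p < k)%N -> L i k * U k j = 0) ->
  (L *m U) i j = \sum_(k < n | (k < p)%N) L i k * U k j + L i p * U p j.
Proof.
move=> above_p; rewrite mxE (bigID (fun k : 'I_n => (k < p)%N)) /=; congr (_ + _).
rewrite (bigD1 p) ?ltnn //= big1 ?addr0 // => k /andP[].
rewrite -leqNgt leq_eqVlt => /orP[/eqP/val_inj->|/above_p-> //]; by rewrite eqxx.
Qed.

Lemma LU_unique (R : fieldType) n (A L1 U1 L2 U2 : 'M[R]_n) :
  A \in unitmx -> is_LU A L1 U1 -> is_LU A L2 U2 -> L1 = L2 /\ U1 = U2.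
Proof.
move=> + LU1; rewrite (unitmx_LU LU1) => /forallP U1d.
move: LU1 => [-> [L1u L1d] U1u] [E [L2u L2d] U2u].
have E' i j : (L1 *m U1) i j = (L2 *m U2) i j by rewrite E.
(* Entries are recovered in increasing order of [minn i j]: row [m] of [U]
   comes first, then column [m] of [L] is found by dividing by the pivot. *)
suff agree m (i j : 'I_n) : (minn i j < m)%N -> L1 i j = L2 i j /\ U1 i j = U2 i j.
  have agree_all i j := agree n i j (leq_ltn_trans (geq_minl _ _) (ltn_ord i)).
  by split; apply/matrixP => i j; case: (agree_all i j).
elim: m i j => [//|m IH] i j.
have prefix_sums (p i' j' : 'I_n) : p = m :> nat ->
    \sum_(k < n | (k < p)%N) L1 i' k * U1 k j' =
    \sum_(k < n | (k < p)%N) L2 i' k * U2 k j'.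
  move=> pm; apply: eq_bigr => k; rewrite pm => km.
  have [-> _] := IH i' k (leq_ltn_trans (geq_minr _ _) km).
  by have [_ ->] := IH k j' (leq_ltn_trans (geq_minl _ _) km).
have Urow (i' j' : 'I_n) : i' = m :> nat -> (i' <= j')%N -> U1 i' j' = U2 i' j'.
  move=> im ij; have := E' i' j'.
  rewrite !(mulmxE_split (p := i')) => [|k /L2u->|k /L1u->]; rewrite ?mul0r //.
  by rewrite prefix_sums // L1d L2d !mul1r => /addrI.
have Lcol (i' j' : 'I_n) : j' = m :> nat -> (j' < i')%N -> L1 i' j' = L2 i' j'.
  move=> jm ji; have := E' i' j'.
  rewrite !(mulmxE_split (p := j')) => [|k /U2u->|k /U1u->]; rewrite ?mulr0 //.
  by rewrite prefix_sums // -(Urow j' j') // => /addrI/mulIf; apply.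
rewrite ltnS leq_eqVlt => /orP[/eqP im|/IH //].
case: (ltngtP i j) im => [ij|ji|/val_inj <-].
- by move=> im; rewrite L1u ?L2u // (Urow _ _ im (ltnW ij)).
- by move=> jm; rewrite U1u ?U2u // (Lcol _ _ jm ji).
- by move=> im; rewrite L1d L2d (Urow _ _ im).
Qed.

(* LU decompositions of the leading [n x n] block of [nat]-indexed arrays, so
   that the size can vary along an induction. *)
Definition is_LU_fun (R : nzRingType) n (A L U : nat -> nat -> R) : Prop :=
  [/\ forall i j, (i < n)%N -> (j < n)%N -> A i j = \sum_(k < n) L i k * U k j,
      forall i j, (i < j)%N -> L i j = 0, forall i, L i i = 1
    & forall i j, (j < i)%N -> U i j = 0].

Lemma is_LU_fun_mx (R : nzRingType) n (A L U : nat -> nat -> R) :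
  is_LU_fun n A L U ->
  is_LU (\matrix_(i < n, j < n) A i j) (\matrix_(i, j) L i j) (\matrix_(i, j) U i j).
Proof.
move=> [AE L0 L1 U0]; split.
- apply/matrixP => i j; rewrite !mxE AE //.
  by apply: eq_bigr => k _; rewrite !mxE.
- by apply: conj => [i j ij|i]; rewrite mxE; [apply: L0|apply: L1].
- by move=> i j ji; rewrite mxE U0.
Qed.

Definition lower_border (R : nzRingType) (c : nat -> R) (L : nat -> nat -> R) i j : R :=
  match i, j with
  | 0, 0 => 1 | 0, _.+1 => 0 | i'.+1, 0 => c i' | i'.+1, j'.+1 => L i' j'
  end.

Definition upper_border (R : nzRingType) (r : nat -> R) (U : nat -> nat -> R) i j : R :=
  match i, j with 0, _ => r j | _.+1, 0 => 0 | i'.+1, j'.+1 => U i' j' end.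

Lemma is_LU_fun_border (R : nzRingType) n (A S L U : nat -> nat -> R) (c r : nat -> R) :
  (forall j, A 0 j = r j) -> (forall i, A i.+1 0 = c i * r 0) ->
  (forall i j, A i.+1 j.+1 = c i * r j.+1 + S i j) ->
  is_LU_fun n S L U -> is_LU_fun n.+1 A (lower_border c L) (upper_border r U).
Proof.
move=> A0j Ai0 ASchur [SE L0 L1 U0]; split.
- move=> i j; rewrite big_ord_recl; under eq_bigr => k _ do rewrite lift0.
  case: i => [|i] ilt; case: j => [|j] jlt /=.
  + by rewrite mul1r A0j big1 ?addr0 // => k _; rewrite mul0r.
  + by rewrite mul1r A0j big1 ?addr0 // => k _; rewrite mul0r.
  + by rewrite Ai0 big1 ?addr0 // => k _; rewrite mulr0.
  + by rewrite ASchur SE.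
- by case=> [|i] [|j] //=; rewrite ltnS => /L0.
- by case=> [|i] //=; apply: L1.
- by case=> [|i] [|j] //=; rewrite ltnS => /U0.
Qed.

Section CauchyMatrix.
Variable R : fieldType.

Definition cauchy (x y a b : nat -> R) i j : R := a i * b j / (x i + y j).

Lemma cauchy_schur_complement (x y a b : nat -> R) i j :
  (forall i j, x i + y j != 0) -> a 0 != 0 -> b 0 != 0 ->
  cauchy x y a b i j =
    cauchy x y a b i 0 / cauchy x y a b 0 0 * cauchy x y a b 0 j
    + cauchy x y (fun i => a i * (x i - x 0) / (x i + y 0))
                 (fun j => b j * (y j - y 0) / (x 0 + y j)) i j.
Proof. by move=> xy0 a0 b0; rewrite /cauchy; field; rewrite !xy0 a0 b0. Qed.

Lemma cauchy_LU n (x y a b : nat -> R) :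
  (forall i j, x i + y j != 0) -> injective x -> injective y ->
  (forall i, a i != 0) -> (forall j, b j != 0) ->
  exists L U, is_LU_fun n (cauchy x y a b) L U /\ forall i, (i < n)%N -> U i i != 0.
Proof.
elim: n x y a b => [|n IH] x y a b xy0 x_inj y_inj a0 b0.
  exists (fun i j => (i == j)%:R), (fun _ _ => 0).
  by split=> //; split=> // [i j /ltn_eqF->|i]; rewrite ?eqxx.
have x_neq i : x i.+1 - x 0 != 0 by rewrite subr_eq0 (inj_eq x_inj).
have y_neq j : y j.+1 - y 0 != 0 by rewrite subr_eq0 (inj_eq y_inj).
have [L [U [LU Ud]]] := IH (fun i => x i.+1) (fun j => y j.+1)
  (fun i => a i.+1 * (x i.+1 - x 0) / (x i.+1 + y 0))
  (fun j => b j.+1 * (y j.+1 - y 0) / (x 0 + y j.+1)) (fun i j => xy0 _ _)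
  (inj_comp x_inj succn_inj) (inj_comp y_inj succn_inj)
  (fun i => ltac:(by rewrite !mulf_neq0 ?invr_eq0))
  (fun j => ltac:(by rewrite !mulf_neq0 ?invr_eq0)).
set C := cauchy x y a b.
have C00 : C 0 0 != 0 by rewrite !mulf_neq0 ?invr_eq0.
exists (lower_border (fun i => C i.+1 0 / C 0 0) L), (upper_border (C 0) U); split.
  apply: is_LU_fun_border LU => // [i|i j]; first by rewrite divfK.
  exact: cauchy_schur_complement.
by case=> [|i] //= /Ud.
Qed.

Lemma cauchy_mx_LU n (x y a b : nat -> R) :
  (forall i j, x i + y j != 0) -> injective x -> injective y ->
  (forall i, a i != 0) -> (forall j, b j != 0) ->
  let C := \matrix_(i < n, j < n) cauchy x y a b i j in
  (exists L U, is_LU C L U) /\ C \in unitmx.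
Proof.
move=> xy0 x_inj y_inj a0 b0 C.
have [L [U [/is_LU_fun_mx LU Ud]]] := cauchy_LU n xy0 x_inj y_inj a0 b0.
split; first by exists (\matrix_(i, j) L i j), (\matrix_(i, j) U i j).
by rewrite (unitmx_LU LU); apply/forallP => i; rewrite mxE Ud.
Qed.

End CauchyMatrix.

Section CovarianceLU.
Variables (R : realType) (V : R).
Hypothesis V_gt0 : 0 < V.

Lemma Sigma_sb_cauchy n :
  Sigma_sb n V = \matrix_(i < n, j < n)
    cauchy (fun i => i.+1%:R) (fun j => j.+1%:R) (fun=> V * pi) (fun=> 1) i j.
Proof. by apply/matrixP => i j; rewrite !mxE /cauchy mulr1 natrD. Qed.

Lemma Sigma_sb_LU n :
  (exists L U, is_LU (Sigma_sb n V) L U) /\ Sigma_sb n V \in unitmx.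
Proof.
have succ_inj : injective (fun i => i.+1%:R : R).
  by move=> i j /eqP; rewrite eqr_nat eqSS => /eqP.
rewrite Sigma_sb_cauchy; apply: cauchy_mx_LU => // _.
by rewrite mulf_neq0 ?gt_eqF ?pi_gt0.
Qed.

Lemma Sigma_sp_LU n (L U : 'M[R]_n.+1) :
  is_LU (Sigma_sb n.+1 V) L U -> is_LU (Sigma_sp n.+1 V) L (U_sp n.+1 V).
Proof.
move=> LU; have L_col0 i : L i ord0 = 2 / i.+2%:R.
  have := LU_col0 i LU; rewrite -(LU_row0 ord0 LU) !mxE addn1 => Si0.
  apply: (@mulIf _ (V * pi / 2)); first by rewrite !mulf_neq0 ?invr_eq0 ?gt_eqF ?pi_gt0.
  by rewrite -Si0; field; rewrite gt_eqF ?pi_gt0 // -(natrD _ 2) pnatr_eq0.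
case: LU => _ Ll _; split=> // [|i j ji]; last first.
  by rewrite mxE; case: eqP ji => // ->.
apply/matrixP => i j; rewrite !mxE big_ord_recl big1 ?addr0 => [|k _]; last first.
  by rewrite mxE lift0 mulr0.
rewrite !mxE /= L_col0; field.
by rewrite -!(natrD _ 2) !pnatr_eq0.
Qed.

Lemma Sigma_mix_LU n (s t : R) (L U : 'M[R]_n.+1) :
  0 < s -> 0 < t -> is_LU (Sigma_sb n.+1 V) L U ->
  let A := s *: Sigma_sb n.+1 V + t *: Sigma_sp n.+1 V in
  is_LU A L (s *: U + t *: U_sp n.+1 V) /\ A \in unitmx.
Proof.
move=> s_gt0 t_gt0 LU A.
have LUA : is_LU A L (s *: U + t *: U_sp n.+1 V) := is_LU_lin s t LU (Sigma_sp_LU LU).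
have A00_gt0 : 0 < A ord0 ord0.
  by rewrite !mxE addr_gt0 ?mulr_gt0 ?divr_gt0 ?exprn_gt0 ?pi_gt0 ?ltr0n.
split; rewrite // (unitmx_LU LUA); apply/forallP => i.
have [->|i0] := eqVneq i ord0; first by rewrite -(LU_row0 ord0 LUA) gt_eqF.
have := (Sigma_sb_LU n.+1).2; rewrite (unitmx_LU LU) => /forallP/(_ i).
by move=> Uii; rewrite !mxE (negbTE (i0 : (i : nat) != 0%N)) mulr0 addr0 mulf_neq0 // gt_eqF.
Qed.

End CovarianceLU.

Theorem theorem8p1 (R : realType) (n : nat) (V c : R) :
  (2 <= n)%N -> 0 < V -> 0 < c ->
  (exists L U : 'M[R]_n, is_LU (Sigma_sb n V) L U) /\
  forall Lsb Usb : 'M[R]_n, is_LU (Sigma_sb n V) Lsb Usb ->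
    let Ucr := if c <= 1 then Usb + c *: U_sp n V
               else c^-1 *: Usb + U_sp n V in
    is_LU (Sigma_cr n V c) Lsb Ucr /\
    (forall Lcr Ucr' : 'M[R]_n, is_LU (Sigma_cr n V c) Lcr Ucr' ->
       Lcr = Lsb /\ Ucr' = Ucr).
Proof.
case: n => [//|n] _ V_gt0 c_gt0.
split=> [|Lsb Usb LU Ucr]; first exact: (Sigma_sb_LU V_gt0 n.+1).1.
have [s [t [s_gt0 t_gt0 -> ->]]] : exists s t, [/\ 0 < s, 0 < t,
    Sigma_cr n.+1 V c = s *: Sigma_sb n.+1 V + t *: Sigma_sp n.+1 V &
    Ucr = s *: Usb + t *: U_sp n.+1 V].
  rewrite /Ucr /Sigma_cr; case: ifP => _.
    by exists 1, c; rewrite !scale1r.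
  by exists c^-1, 1; rewrite !scale1r invr_gt0.
have [LUcr unit_cr] := Sigma_mix_LU V_gt0 s_gt0 t_gt0 LU.
split=> // Lcr Ucr' LU'.
exact: LU_unique unit_cr LU' LUcr.
Qed.
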